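(* Let $X$ be an ultradiscrete ballean and $n\ge2$. Then the $n$-th power $X^n$ is not normal, but the hypersymmetric power $[X]^{\le n}$ is normal.
   Context: A ballean is a pair $(X,\mathcal E_X)$ where $X$ is a set and $\mathcal E_X$ is a family of subsets of $X\times X$ (entourages) such that: each $E\in\mathcal E_X$ contains the diagonal $\Delta_X$; for any $E,F\in\mathcal E_X$ there is $D\in\mathcal E_X$ with $E\circ F^{-1}\subset D$; and $\bigcup\mathcal E_X=X\times X$. For $E\in\mathcal E_X$, $x\in X$, $A\subset X$: $E[x]=\{y:(x,y)\in E\}$, $E[A]=\bigcup_{a\in A}E[a]$. $B\subset X$ is bounded if $B\subset E[x]$ for some $E\in\mathcal E_X$, $x\in X$; $\mathcal B_X$ is the family of bounded sets. Sets $A,B$ are asymptotically disjoint if $E[A]\cap E[B]\in\mathcal B_X$ for all $E\in\mathcal E_X$; $U$ is an asymptotic neighborhood of $A$ if $E[A]\setminus U\in\mathcal B_X$ for all $E$; $X$ is normal if any two asymptotically disjoint sets have disjoint asymptotic neighborhoods, and ultranormal if it contains no two unbounded asymptotically disjoint sets. $X$ is discrete if $X$ is unbounded and for every $E\in\mathcal E_X$ there is a bounded $B_E$ with $E[x]=\{x\}$ for $x\in X\setminus B_E$; ultradiscrete = discrete and ultranormal. The power $X^n$ has entourages $\{(x,y)\in X^n\times X^n:(x(i),y(i))\in E_i\ \forall i\}$ with $E_i\in\mathcal E_X$. The hyperballean $[X]^{\mathcal B}$ is the set $\mathcal B_X\setminus\{\emptyset\}$ with entourages $\hat E=\{(A,B):A\subset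 E[B],\ B\subset E[A]\}$, $E\in\mathcal E_X$; the hypersymmetric power $[X]^{\le n}$ is its subballean $\{A\in[X]^{\mathcal B}:|A|\le n\}$ (a subballean of $(Z,\mathcal E_Z)$ on $Y\subset Z$ has entourages $(Y\times Y)\cap E$, $E\in\mathcal E_Z$). *)

From mathcomp Require Import all_boot.
From Stdlib Require List.
Set Implicit Arguments. Unset Strict Implicit. Unset Printing Implicit Defensive.

Definition ballS (X : Type) (E : X -> X -> Prop) (A : X -> Prop) : X -> Prop :=
  fun y => exists a, A a /\ E a y.

Record is_ballean (X : Type) (ent : (X -> X -> Prop) -> Prop) : Prop := {
  ent_diag : forall E, ent E -> forall x, E x x;
  (* E o F^{-1} = {(x,y) | exists z, (x,z) in E /\ (z,y) in F^{-1}} *)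
  ent_comp : forall E F, ent E -> ent F ->
     exists D, ent D /\ forall x y, (exists z, E x z /\ F y z) -> D x y;
  ent_cover : forall x y, exists E, ent E /\ E x y }.

Definition bounded (X : Type) (ent : (X -> X -> Prop) -> Prop) (B : X -> Prop) :=
  exists E x, ent E /\ forall y, B y -> E x y.

Definition asym_disjoint (X : Type) (ent : (X -> X -> Prop) -> Prop)
  (A B : X -> Prop) :=
  forall E, ent E -> bounded ent (fun y => ballS E A y /\ ballS E B y).

Definition asym_nbhd (X : Type) (ent : (X -> X -> Prop) -> Prop)
  (U A : X -> Prop) :=
  forall E, ent E -> bounded ent (fun y => ballS E A y /\ ~ U y).

Definition normal (X : Type) (ent : (X -> X -> Prop) -> Prop) :=
  forall A B : X -> Prop, asym_disjoint ent A B ->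
    exists U V : X -> Prop, asym_nbhd ent U A /\ asym_nbhd ent V B /\
      (forall y, ~ (U y /\ V y)).

Definition ultranormal (X : Type) (ent : (X -> X -> Prop) -> Prop) :=
  ~ exists A B : X -> Prop,
      ~ bounded ent A /\ ~ bounded ent B /\ asym_disjoint ent A B.

Definition discrete (X : Type) (ent : (X -> X -> Prop) -> Prop) :=
  ~ bounded ent (fun _ => True) /\
  forall E, ent E -> exists B, bounded ent B /\
     forall x, ~ B x -> forall y, E x y <-> y = x.

Definition ultradiscrete (X : Type) (ent : (X -> X -> Prop) -> Prop) :=
  discrete ent /\ ultranormal ent.

Definition power_ent (X : Type) (ent : (X -> X -> Prop) -> Prop) (n : nat) :
    (('I_n -> X) -> ('I_n -> X) -> Prop) -> Prop :=
  fun R => exists Es : 'I_n -> X -> X -> Prop, (forall i, ent (Es i)) /\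
    forall x y, R x y <-> forall i, Es i (x i) (y i).

Definition hyp_pt (X : Type) (ent : (X -> X -> Prop) -> Prop) (n : nat) :=
  { A : X -> Prop | (exists x, A x) /\ bounded ent A /\
      exists l : seq X, size l <= n /\ forall x, A x <-> List.In x l }.

Definition hyp_ent (X : Type) (ent : (X -> X -> Prop) -> Prop) (n : nat) :
    (hyp_pt ent n -> hyp_pt ent n -> Prop) -> Prop :=
  fun R => exists E, ent E /\ forall A B : hyp_pt ent n,
    R A B <-> ((forall a, sval A a -> ballS E (sval B) a) /\
               (forall b, sval B b -> ballS E (sval A) b)).

Arguments power_ent {X} ent n _.
Arguments hyp_pt {X} ent n.
Arguments hyp_ent {X} ent n _.

(* Since X is ultradiscrete, its bounded sets form the dual of a free ultrafilter,
   and Katetov's lemma applies: a fixed-point-free map f sends some large set into a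
   bounded one.  In X^n two coordinate axes are asymptotically disjoint; disjoint
   asymptotic neighbourhoods U, V of them would give a total relation
   "(b, a) is not in U or (a, b) is not in V" whose images of bounded sets are
   bounded, and choosing predecessors for it contradicts Katetov's lemma.
   In [X]^{<=n}, for asymptotically disjoint families P and Q, Katetov's lemma bounds
   the set of points lying in non-singleton members of both, so the points of the
   non-singleton members of one family, say Q, are bounded; then the singletons of Q
   and their complement are disjoint asymptotic neighbourhoods of Q and P. *)

From mathcomp Require Import all_boot.
From mathcomp Require Import zify.
From Stdlib Require Import ClassicalEpsilon Classical FunctionalExtensionality PropExtensionality.
Set Implicit Arguments. Unset Strict Implicit.

Section Ballean.
Variables (X : Type) (ent : (X -> X -> Prop) -> Prop).
Hypothesis hX : is_ballean ent.

Lemma ent_transpose E : ent E -> exists E', ent E' /\ forall x y, E x y -> E' y x.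
Proof.
move=> hE; have [D [hD HD]] := ent_comp hX hE hE.
exists D; split=> // x y Exy; apply: HD.
by exists y; split; first exact: (ent_diag hX hE y).
Qed.

Lemma ent_compose E F : ent E -> ent F ->
  exists D, ent D /\ forall x z y, E x z -> F z y -> D x y.
Proof.
move=> hE hF; have [F' [hF' HF']] := ent_transpose hF.
have [D [hD HD]] := ent_comp hX hE hF'.
by exists D; split=> // x z y Exz Fzy; apply: HD; exists z; split=> //; exact: HF'.
Qed.

Lemma ent_union E F : ent E -> ent F ->
  exists D, ent D /\ forall x y, E x y \/ F x y -> D x y.
Proof.
move=> hE hF; have [D [hD HD]] := ent_compose hE hF.
exists D; split=> // x y [Exy|Fxy].
- by apply: (HD x y) => //; exact: (ent_diag hX hF y).
- by apply: (HD x x) => //; exact: (ent_diag hX hE x).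
Qed.

Lemma bounded_sub (S T : X -> Prop) :
  (forall x, S x -> T x) -> bounded ent T -> bounded ent S.
Proof. by move=> ST [E [x [hE H]]]; exists E, x; split=> // y /ST; exact: H. Qed.

Lemma bounded_singleton x : bounded ent (fun y => y = x).
Proof. by have [E [hE Exx]] := ent_cover hX x x; exists E, x; split=> // y ->. Qed.

Lemma bounded_centered x S : bounded ent S -> exists E, ent E /\ forall s, S s -> E x s.
Proof.
move=> [E [y [hE H]]]; have [G [hG Gxy]] := ent_cover hX x y.
have [D [hD HD]] := ent_compose hG hE.
by exists D; split=> // s Ss; apply: (HD _ y) => //; exact: H.
Qed.

Lemma bounded_union (S T : X -> Prop) :
  bounded ent S -> bounded ent T -> bounded ent (fun x => S x \/ T x).
Proof.
move=> [E [x [hE HS]]] /(bounded_centered x) [F [hF HT]].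
have [D [hD HD]] := ent_union hE hF.
by exists D, x; split=> // y [/HS|/HT] h; apply: HD; [left|right].
Qed.

Lemma bounded_square (S : X -> Prop) :
  bounded ent S -> exists E, ent E /\ forall s t, S s -> S t -> E s t.
Proof.
move=> [E [x [hE H]]]; have [E' [hE' HE']] := ent_transpose hE.
have [D [hD HD]] := ent_compose hE' hE.
by exists D; split=> // s t Ss St; apply: (HD _ x); [apply: HE'|]; exact: H.
Qed.

Lemma bounded_ball E S : ent E -> bounded ent S -> bounded ent (ballS E S).
Proof.
move=> hE [F [x [hF H]]]; have [D [hD HD]] := ent_compose hF hE.
by exists D, x; split=> // y [a [Sa Eay]]; apply: (HD _ a) => //; exact: H.
Qed.

Lemma discrete_near_diag E : discrete ent -> ent E ->
  exists K, bounded ent K /\ forall x y, E x y -> x = y \/ (K x /\ K y).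
Proof.
move=> [_ hd] hE; have [B [hB HB]] := hd E hE.
exists (fun y => B y \/ ballS E B y); split; first exact: bounded_union (bounded_ball hE hB).
move=> x y Exy; case: (classic (B x)) => Bx.
- by right; split; [left | right; exists x].
- by left; symmetry; apply/(HB x Bx).
Qed.

Lemma discrete_compl_asym_disjoint (S : X -> Prop) :
  discrete ent -> asym_disjoint ent S (fun x => ~ S x).
Proof.
move=> hd E hE; have [K [hK HK]] := discrete_near_diag hd hE.
apply: bounded_sub hK => y [[a [Sa Eay]] [b [Sb Eby]]].
case: (HK _ _ Eay) => [eay|[]] //; case: (HK _ _ Eby) => [eby|[]] //.
by subst; case: Sb.
Qed.

End Ballean.

Lemma asym_disjoint_sym X (ent : (X -> X -> Prop) -> Prop) A B :
  asym_disjoint ent A B -> asym_disjoint ent B A.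
Proof. by move=> hAB E /hAB; apply: bounded_sub => y []. Qed.

Record free_ultraideal (X : Type) (I : (X -> Prop) -> Prop) : Prop := {
  ui_sub : forall S T : X -> Prop, (forall x, S x -> T x) -> I T -> I S;
  ui_union : forall S T : X -> Prop, I S -> I T -> I (fun x => S x \/ T x);
  ui_single : forall x : X, I (fun y => y = x);
  ui_proper : ~ I (fun _ => True);
  ui_ultra : forall S : X -> Prop, I S \/ I (fun x => ~ S x) }.

Lemma ultradiscrete_free_ultraideal X (ent : (X -> X -> Prop) -> Prop) :
  is_ballean ent -> ultradiscrete ent -> free_ultraideal (bounded ent).
Proof.
move=> hX [[unb hdisc] hun]; split=> //.
- exact: bounded_sub.
- exact: bounded_union.
- exact: bounded_singleton.
- move=> S; apply: NNPP => nbd; apply: hun; exists S, (fun x => ~ S x); do !split.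
  + by move=> h; apply: nbd; left.
  + by move=> h; apply: nbd; right.
  + exact: discrete_compl_asym_disjoint.
Qed.

Definition least (P : nat -> Prop) : nat :=
  epsilon (inhabits 0) (fun m => P m /\ forall k, P k -> m <= k).

Lemma leastP (P : nat -> Prop) :
  (exists m, P m) -> P (least P) /\ forall k, P k -> least P <= k.
Proof.
move=> [m Pm]; apply: (epsilon_spec (inhabits 0) (fun m => P m /\ forall k, P k -> m <= k)).
apply: NNPP => nomin.
elim/ltn_ind: m Pm => m IH Pm; apply: nomin; exists m; split=> // k Pk.
by rewrite leqNgt; apply/negP => km; exact: IH k km Pk.
Qed.

(* Katetov: with [depth x] the number of steps until x enters the forward orbit of
   the root of its component and [height x] its position on that orbit, f flips
   the parity of [depth + height] except where the height wraps around a cycle;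
   those points get a third colour. *)
Section FixedPointFreeColouring.
Variables (X : Type) (f : X -> X).
Hypotheses (X_inh : inhabited X) (f_nofix : forall x, f x <> x).

Let root x := epsilon X_inh (fun r => exists a b, iter a f r = iter b f x).

Lemma root_f x : root (f x) = root x.
Proof.
rewrite /root; congr epsilon; apply: functional_extensionality => r.
apply: propositional_extensionality; split=> [[a [b e]]|[a [b e]]].
- by exists a, b.+1; rewrite iterSr.
- by exists a.+1, b; rewrite iterS e -iterSr.
Qed.

Let depth x := least (fun a => exists b, iter a f x = iter b f (root x)).
Let height x := least (fun b => iter (depth x) f x = iter b f (root x)).

Lemma depthP x : (exists b, iter (depth x) f x = iter b f (root x)) /\
  forall a b, iter a f x = iter b f (root x) -> depth x <= a.
Proof.
have [] := @leastP (fun a => exists b, iter a f x = iter b f (root x)).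
  have /epsilon_spec : exists r, exists a b, iter a f r = iter b f x.
    by exists x, 0, 0.
  by move=> [a [b e]]; exists b, a.
by move=> hd dmin; split=> // a b e; apply: dmin; exists b.
Qed.

Lemma heightP x : iter (depth x) f x = iter (height x) f (root x) /\
  forall b, iter (depth x) f x = iter b f (root x) -> height x <= b.
Proof. exact: leastP (depthP x).1. Qed.

Lemma depth_f x : 0 < depth x ->
  depth (f x) = (depth x).-1 /\ height (f x) = height x.
Proof.
move=> d_gt0; have iter_f a : iter a f (f x) = iter a.+1 f x by rewrite iterSr.
have df : depth (f x) = (depth x).-1.
  apply/anti_leq/andP; split.
  - have [b e] := (depthP x).1; apply: (depthP (f x)).2 (b) _.
    by rewrite iter_f prednK // root_f.
  - have [b e] := (depthP (f x)).1; rewrite -ltnS prednK //.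
    by apply: (depthP x).2 (b) _; rewrite -iter_f e root_f.
split=> //; rewrite /height; congr least; apply: functional_extensionality => b.
by rewrite df iter_f prednK // root_f.
Qed.

Lemma depth0_root x : depth x = 0 -> x = iter (height x) f (root x).
Proof. by move=> d0; have [e _] := heightP x; rewrite d0 in e. Qed.

Lemma depth0_f x : depth x = 0 ->
  depth (f x) = 0 /\ height (f x) <= (height x).+1.
Proof.
move=> d0; have ex := depth0_root d0.
have ef : f x = iter (height x).+1 f (root (f x)) by rewrite root_f iterS -ex.
have df : depth (f x) = 0 by apply/eqP; rewrite -leqn0; exact: (depthP (f x)).2 0 _ ef.
by split=> //; apply: (heightP (f x)).2; rewrite df.
Qed.

Lemma depth0_height_min x b : depth x = 0 -> x = iter b f (root x) -> height x <= b.
Proof. by move=> d0 e; apply: (heightP x).2; rewrite d0. Qed.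

Let wraps x := depth x = 0 /\ height (f x) <> (height x).+1.

Lemma not_wraps_twice x : wraps x -> ~ wraps (f x).
Proof.
move=> [d0 w0] [d1 w1].
have [_ le1] := depth0_f d0; have [d2 le2] := depth0_f d1.
have ex := depth0_root d0.
have efx := depth0_root d1; rewrite root_f in efx.
have effx := depth0_root d2; rewrite !root_f in effx.
set r := root x in ex efx effx.
set b := height x in ex le1 w0; set b1 := height (f x) in efx le1 w0 le2 w1.
set b2 := height (f (f x)) in effx le2 w1.
have b1_neq : b1 <> b by move=> eb; apply: (@f_nofix x); rewrite {2}ex efx eb.
have : height x <= b - b1.+1 + b2.
  apply: depth0_height_min => //.
  rewrite iterD -effx efx -iterS -iterD subnK -?ex //; lia.
rewrite -/b; lia.
Qed.

Lemma fixed_point_free_colouring :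
  exists c : X -> nat, forall x, c x < 3 /\ c (f x) <> c x.
Proof.
pose c x := if excluded_middle_informative (wraps x) then 2
            else nat_of_bool (odd (depth x + height x)).
exists c => x; rewrite /c; split.
  by destruct (excluded_middle_informative (wraps x)) => //; case: odd.
destruct (excluded_middle_informative (wraps x)) as [wx|wx];
  destruct (excluded_middle_informative (wraps (f x))) as [wfx|wfx].
- by case: (not_wraps_twice wx wfx).
- by apply/eqP; case: odd.
- by apply/eqP; case: odd.
- suff -> : odd (depth (f x) + height (f x)) = ~~ odd (depth x + height x).
    by apply/eqP; case: odd.
  case: (posnP (depth x)) => [d0|d_gt0].
  + have [d1 _] := depth0_f d0.
    have -> : height (f x) = (height x).+1 by apply: NNPP => h; apply: wx.
    by rewrite d0 d1 addnS.
  + by have [-> ->] := depth_f d_gt0; rewrite -{2}(prednK d_gt0) addSn /= negbK.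
Qed.

End FixedPointFreeColouring.

Definition rel_image X (R : X -> X -> Prop) (K : X -> Prop) : X -> Prop :=
  fun b => exists a, K a /\ R a b.

Section FreeUltraideal.
Variables (X : Type) (I : (X -> Prop) -> Prop).
Hypothesis hI : free_ultraideal I.

Lemma ui_witness S : I S -> exists x, ~ S x.
Proof.
move=> IS; apply: NNPP => hS; apply: (ui_proper hI); apply: (ui_sub hI _ IS) => x _.
by apply: NNPP => nSx; apply: hS; exists x.
Qed.

Lemma ui_inhabited : inhabited X.
Proof.
case: (ui_ultra hI (fun _ => True)) => [/(ui_proper hI)[]|/ui_witness[x _]].
exact: inhabits x.
Qed.

Lemma ui_other (x : X) : exists y, y <> x.
Proof. exact: ui_witness (ui_single hI x). Qed.

Lemma ui_prime S T : I (fun x => S x /\ T x) -> I S \/ I T.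
Proof.
move=> IST; case: (ui_ultra hI S) => [|ICS]; [by left | right].
apply: (ui_sub hI _ (ui_union hI ICS IST)) => x Tx.
by case: (classic (S x)) => Sx; [right | left].
Qed.

Lemma katetov f : (forall x, f x <> x) ->
  forall W, ~ I W -> exists M, I M /\ ~ I (fun x => W x /\ M (f x)).
Proof.
move=> f_nofix W hW.
have [c hc] := fixed_point_free_colouring ui_inhabited f_nofix.
have [j hj] : exists j, ~ I (fun x => W x /\ c x = j).
  apply: NNPP => small; apply: hW.
  have Ic j : I (fun x => W x /\ c x = j) by apply: NNPP => h; apply: small; exists j.
  apply: (ui_sub hI _ (ui_union hI (Ic 0) (ui_union hI (Ic 1) (Ic 2)))) => x Wx.
  by case: (hc x) => + _; case: (c x) => [|[|[|k]]] // _; [left | right; left | right; right].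
exists (fun y => c y <> j); split.
- case: (ui_ultra hI (fun y => c y = j)) => // Ij.
  by case: hj; apply: (ui_sub hI _ Ij) => x [].
- move=> h; apply: hj; apply: (ui_sub hI _ h) => x [Wx cx]; split=> //.
  by rewrite -cx; exact: (hc x).2.
Qed.

Lemma katetov_family (phi : nat -> X -> X) : (forall j x, phi j x <> x) ->
  forall m W, ~ I W ->
  exists M, I M /\ ~ I (fun x => W x /\ forall j, j < m -> M (phi j x)).
Proof.
move=> phi_nofix; elim=> [|m IH] W hW.
- exists (fun _ => False); split.
    by case: (ui_ultra hI (fun _ => True)) => [/(ui_proper hI)[]|]; apply: (ui_sub hI).
  by move=> h; apply: hW; apply: (ui_sub hI _ h).
- have [M [IM hWM]] := IH W hW.
  have [M' [IM' hWM']] := katetov (phi_nofix m) hWM.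
  exists (fun y => M y \/ M' y); split; first exact: (ui_union hI IM IM').
  move=> h; apply: hWM'; apply: (ui_sub hI _ h) => x [[Wx HM] HM']; split=> // j.
  by rewrite ltnS leq_eqVlt => /orP[/eqP ->|/HM]; [right | left].
Qed.

(* Since images of singletons are small, totality gives every x a predecessor
   g x <> x; Katetov's lemma for g yields a small M whose image contains the large
   set g^-1(M). *)
Lemma total_rel_image_not_ideal (R : X -> X -> Prop) :
  (forall y z, R y z \/ R z y) -> ~ (forall K, I K -> I (rel_image R K)).
Proof.
move=> R_total R_img.
have [g g_spec] : exists g : X -> X, forall x, g x <> x /\ R (g x) x.
  apply: (choice (fun x y => y <> x /\ R y x)) => x.
  have [w hw] := ui_witness (ui_union hI (R_img _ (ui_single hI x)) (ui_single hI x)).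
  exists w; split=> [wx|]; first by apply: hw; right.
  by case: (R_total x w) => // Rxw; case: hw; left; exists x.
have [M [IM notI]] := katetov (fun x => (g_spec x).1) (ui_proper hI).
apply: notI; apply: (ui_sub hI _ (R_img _ IM)) => x [_ Mgx].
by exists (g x); split=> //; exact: (g_spec x).2.
Qed.

End FreeUltraideal.

Section PowerAxes.
Variables (X : Type) (ent : (X -> X -> Prop) -> Prop) (n : nat) (x0 : X).

Definition axis (i : 'I_n) (x : 'I_n -> X) : Prop := forall k, k != i -> x k = x0.

Definition pair_pt (i j : 'I_n) (z y : X) : 'I_n -> X :=
  fun k => if k == i then z else if k == j then y else x0.

Lemma pair_pt_sym i j z y : i != j -> pair_pt i j z y = pair_pt j i y z.
Proof.
move=> ij; apply: functional_extensionality => k; rewrite /pair_pt.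
by case: (eqVneq k i) => [->|//]; rewrite (negbTE ij).
Qed.

Lemma axis_asym_disjoint i j : i != j -> asym_disjoint (power_ent ent n) (axis i) (axis j).
Proof.
move=> ij R [Es [hEs HEs]]; exists R, (fun _ => x0); split; first by exists Es.
move=> y [[a [Aa Ray]] [b [Bb Rby]]]; apply/HEs => k.
case: (eqVneq k i) => [->|ki].
- by rewrite -(Bb i ij); exact: (proj1 (HEs b y) Rby i).
- by rewrite -(Aa k ki); exact: (proj1 (HEs a y) Ray k).
Qed.

(* For y in K, pair_pt i j z y is near the axis point pair_pt i j z x0, so it
   escapes U only for z in a bounded set. *)
Lemma nbhd_axis_bounded i j U K : is_ballean ent -> i != j ->
  asym_nbhd (power_ent ent n) U (axis i) -> bounded ent K ->
  bounded ent (fun z => exists y, K y /\ ~ U (pair_pt i j z y)).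
Proof.
move=> hX ij hU /(bounded_centered hX x0) [D [hD HD]].
have hR : power_ent ent n (fun u v => forall k, D (u k) (v k)) by exists (fun _ => D).
have [R [c [[Es [hEs HEs]] Hc]]] := hU _ hR.
exists (Es i), (c i); split=> // z [y [Ky nU]].
have near : ballS (fun u v => forall k, D (u k) (v k)) (axis i) (pair_pt i j z y).
  exists (pair_pt i j z x0); split=> [k ki|k]; rewrite /pair_pt.
    by rewrite (negbTE ki); case: (k == j).
  case: (k == i); first exact: (ent_diag hX hD).
  by case: (k == j); [exact: HD | exact: (ent_diag hX hD)].
by have := proj1 (HEs c _) (Hc _ (conj near nU)) i; rewrite /pair_pt eqxx.
Qed.

End PowerAxes.

Lemma power_not_normal X (ent : (X -> X -> Prop) -> Prop) n :
  is_ballean ent -> free_ultraideal (bounded ent) -> 1 < n -> ~ normal (power_ent ent n).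
Proof.
move=> hX hI n_gt1 hnorm; have [x0] := ui_inhabited hI.
pose i : 'I_n := Ordinal (ltnW n_gt1); pose j : 'I_n := Ordinal n_gt1.
have ij : i != j by []; have ji : j != i by [].
have [U [V [hU [hV hUV]]]] := hnorm (axis x0 i) (axis x0 j) (axis_asym_disjoint x0 ij).
pose Rel a b := ~ U (pair_pt x0 i j b a) \/ ~ V (pair_pt x0 j i b a).
apply: (total_rel_image_not_ideal hI (R := Rel)) => [y z|K hK].
  case: (classic (U (pair_pt x0 i j z y))) => hu; [right; right | by left; left].
  by rewrite -pair_pt_sym // => hv; exact: hUV _ (conj hu hv).
apply: bounded_sub (bounded_union hX (nbhd_axis_bounded hX ij hU hK)
                                     (nbhd_axis_bounded hX ji hV hK)).
by move=> b [a [Ka [nU|nV]]]; [left | right]; exists a.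
Qed.

Lemma size_length T (l : seq T) : size l = List.length l.
Proof. by elim: l => //= a l ->. Qed.

Section Hyperballean.
Variables (X : Type) (ent : (X -> X -> Prop) -> Prop) (n : nat).
Hypothesis hX : is_ballean ent.

Definition hat_rel (E : X -> X -> Prop) (A B : hyp_pt ent n) : Prop :=
  (forall a, sval A a -> ballS E (sval B) a) /\ (forall b, sval B b -> ballS E (sval A) b).

Lemma hat_rel_hyp_ent E : ent E -> hyp_ent ent n (hat_rel E).
Proof. by move=> hE; exists E; split=> // A B; exact: iff_refl. Qed.

Lemma hat_rel_same_support E (A B : hyp_pt ent n) : ent E ->
  (forall y, sval A y <-> sval B y) -> hat_rel E A B.
Proof.
move=> hE AB; split=> [a Aa|b Bb].
- by exists a; split; [apply/AB | exact: (ent_diag hX hE a)].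
- by exists b; split; [apply/AB | exact: (ent_diag hX hE b)].
Qed.

Lemma hat_rel_pinned E (S : X -> Prop) (A B : hyp_pt ent n) x : ent E ->
  (forall s t, S s -> S t -> E s t) -> sval A x -> sval B x ->
  (forall a, sval A a -> a <> x -> S a) -> (forall b, sval B b -> b <> x -> S b) ->
  (exists a, sval A a /\ a <> x) -> (exists b, sval B b /\ b <> x) -> hat_rel E A B.
Proof.
move=> hE ES Ax Bx SA SB [a' [Aa' a'x]] [b' [Bb' b'x]]; split=> [a Aa|b Bb].
- case: (classic (a = x)) => [->|ax]; first by exists x; split=> //; exact: (ent_diag hX hE x).
  by exists b'; split=> //; apply: ES; [exact: SB | exact: SA].
- case: (classic (b = x)) => [->|bx]; first by exists x; split=> //; exact: (ent_diag hX hE x).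
  by exists a'; split=> //; apply: ES; [exact: SA | exact: SB].
Qed.

Lemma hyp_singleton (c : X) : 0 < n -> exists C : hyp_pt ent n, forall y, sval C y <-> y = c.
Proof.
move=> n_gt0.
have C_pt : (exists x, x = c) /\ bounded ent (fun y => y = c) /\
    exists l : seq X, size l <= n /\ forall x, x = c <-> List.In x l.
  split; first by exists c.
  split; first exact: bounded_singleton.
  by exists [:: c]; split=> // x; split=> [->|[->|[]]]; [left|].
by exists (exist _ (fun y => y = c) C_pt).
Qed.

Lemma hyp_bounded_support (F : hyp_pt ent n -> Prop) : bounded (hyp_ent ent n) F ->
  exists T, bounded ent T /\ forall Y, F Y -> forall y, sval Y y -> T y.
Proof.
move=> [R [C [[E [hE HE]] HC]]]; exists (ballS E (sval C)); split.
  exact: (bounded_ball hX hE (proj1 (proj2 (proj2_sig C)))).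
by move=> Y FY y Yy; exact: (proj1 (HE C Y) (HC Y FY)).2 y Yy.
Qed.

Lemma hyp_bounded_of_support (c : X) (T : X -> Prop) : 0 < n -> bounded ent T ->
  bounded (hyp_ent ent n) (fun Y => forall y, sval Y y -> T y).
Proof.
move=> n_gt0 bT; have [C hC] := hyp_singleton c n_gt0.
have [E [hE ES]] := bounded_square hX (bounded_union hX bT (bounded_singleton hX c)).
exists (hat_rel E), C; split; first exact: hat_rel_hyp_ent.
move=> Y YT; have [y Yy] := proj1 (proj2_sig Y); split.
- move=> a /hC ->; exists y; split=> //.
  by apply: ES; [left; exact: YT | right].
- move=> b Yb; exists c; split; first exact/hC.
  by apply: ES; [right | left; exact: YT].
Qed.

Definition nontrivial_pts (Q : hyp_pt ent n -> Prop) (x : X) : Prop :=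
  exists D, Q D /\ sval D x /\ exists y, sval D y /\ y <> x.

Definition one_point_in (Q : hyp_pt ent n -> Prop) (Y : hyp_pt ent n) : Prop :=
  exists D, Q D /\ (forall y, sval D y <-> sval Y y) /\
    forall y y', sval D y -> sval D y' -> y = y'.

(* V := the copies of one-point members of Q, U := its complement. *)
Lemma hyp_separate (c : X) (P Q : hyp_pt ent n -> Prop) : 0 < n -> discrete ent ->
  asym_disjoint (hyp_ent ent n) P Q -> bounded ent (nontrivial_pts Q) ->
  exists U V, asym_nbhd (hyp_ent ent n) U P /\ asym_nbhd (hyp_ent ent n) V Q /\
    forall Y, ~ (U Y /\ V Y).
Proof.
move=> n_gt0 hdisc hPQ bQ.
exists (fun Y => ~ one_point_in Q Y), (one_point_in Q); split; last split.
- move=> R hR; apply: bounded_sub (hPQ R hR) => Y [PY /NNPP [D [QD [DY _]]]].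
  split=> //; exists D; split=> //; have [E [hE ->]] := hR.
  exact: hat_rel_same_support.
- move=> R [E [hE HE]]; have [K [bK HK]] := discrete_near_diag hX hdisc hE.
  apply: bounded_sub (hyp_bounded_of_support c n_gt0
    (bounded_union hX (bounded_ball hX hE bQ) bK)).
  move=> Y [[D [QD /HE [_ DY]]] nV] y Yy.
  have [d [Dd Edy]] := DY y Yy.
  case: (classic (exists d', sval D d' /\ d' <> d)) => [hd|single].
    by left; exists d; split=> //; exists D.
  have D_only z : sval D z -> z = d by move=> Dz; apply: NNPP => zd; apply: single; exists z.
  case: (HK _ _ Edy) => [edy|[_ Ky]]; last by right.
  have [y' [Yy' y'd]] : exists y', sval Y y' /\ y' <> d.
    apply: NNPP => hno; apply: nV; exists D; split=> //; split=> [z|z z' /D_only -> /D_only ->] //.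
    split=> [/D_only ->|Yz]; first by rewrite edy.
    by have -> : z = d by apply: NNPP => zd; apply: hno; exists z.
  have [d' [/D_only -> Edy']] := DY y' Yy'.
  by case: (HK _ _ Edy') => [dy'|[Kd _]]; [case: y'd | right; rewrite -edy].
- by move=> Y [].
Qed.

Lemma nontrivial_pts_enum (Q : hyp_pt ent n -> Prop) : (forall x : X, exists y, y <> x) ->
  exists phi : nat -> X -> X, (forall j x, phi j x <> x) /\
    forall x, nontrivial_pts Q x -> exists A, Q A /\ sval A x /\
      (exists a, sval A a /\ a <> x) /\
      forall a, sval A a -> a <> x -> exists2 j, j < n & phi j x = a.
Proof.
move=> other.
have [l hl] : exists l : X -> seq X, forall x, nontrivial_pts Q x -> exists A, Q A /\
    sval A x /\ (exists a, sval A a /\ a <> x) /\ size (l x) <= n /\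
    forall y, sval A y <-> List.In y (l x).
  apply: (choice (fun x l => nontrivial_pts Q x -> exists A, Q A /\ sval A x /\
    (exists a, sval A a /\ a <> x) /\ size l <= n /\ forall y, sval A y <-> List.In y l)) => x.
  case: (classic (nontrivial_pts Q x)) => [[D [QD [Dx hD]]]|nx]; last by exists [::].
  have [l [hsz hl]] := proj2 (proj2 (proj2_sig D)).
  by exists l => _; exists D.
have: forall p : nat * X, exists y, y <> p.2 /\
    (List.nth p.1 (l p.2) p.2 <> p.2 -> y = List.nth p.1 (l p.2) p.2).
  case=> j x /=; case: (classic (List.nth j (l x) x = x)) => [nx|hx].
    by have [y yx] := other x; exists y.
  by exists (List.nth j (l x) x).
move=> /choice [g hg]; exists (fun j x => g (j, x)); split=> [j x|x /hl].
  exact: (hg (j, x)).1.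
move=> [A [QA [Ax [hA [hsz Al]]]]]; exists A; do 3!split=> //; move=> a Aa ax.
have [j [jl ej]] := List.In_nth (l x) a x (proj1 (Al a) Aa).
exists j; first by apply: leq_trans hsz; rewrite size_length; apply/ltP.
by rewrite (hg (j, x)).2 /= ej.
Qed.

End Hyperballean.

(* If x is a nontrivial point of both P and Q, witnessed by A in P and D in Q, then
   A is hat-E-close to D as soon as E is total on the other points of A and D.
   Katetov's lemma confines those other points, for a large set of such x, to a
   bounded set, so these x lie in the bounded set hat-E[P] meet hat-E[Q]. *)
Lemma nontrivial_pts_meet_bounded X (ent : (X -> X -> Prop) -> Prop) n
  (P Q : hyp_pt ent n -> Prop) : is_ballean ent -> free_ultraideal (bounded ent) ->
  asym_disjoint (hyp_ent ent n) P Q ->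
  bounded ent (fun x => nontrivial_pts P x /\ nontrivial_pts Q x).
Proof.
move=> hX hI hPQ; apply: NNPP => hW.
have [phi [phi_nofix phiP]] := nontrivial_pts_enum P (ui_other hI).
have [psi [psi_nofix psiP]] := nontrivial_pts_enum Q (ui_other hI).
have [M1 [bM1 hW1]] := katetov_family hI phi_nofix n hW.
have [M2 [bM2 hW2]] := katetov_family hI psi_nofix n hW1.
have [E [hE ES]] := bounded_square hX (bounded_union hX bM1 bM2).
have [T [bT HT]] := hyp_bounded_support hX (hPQ _ (hat_rel_hyp_ent n hE)).
apply: hW2; apply: bounded_sub bT => x [[[Px Qx] inM1] inM2].
have [A [PA [Ax [hA A_phi]]]] := phiP x Px.
have [D [QD [Dx [hD D_psi]]]] := psiP x Qx.
have SA a : sval A a -> a <> x -> M1 a \/ M2 a.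
  by move=> Aa ax; have [j jn <-] := A_phi a Aa ax; left; exact: inM1.
have SD d : sval D d -> d <> x -> M1 d \/ M2 d.
  by move=> Dd dx; have [j jn <-] := D_psi d Dd dx; right; exact: inM2.
apply: (HT A _ x Ax); split.
- by exists A; split=> //; exact: (hat_rel_pinned hX hE ES Ax Ax SA SA hA hA).
- by exists D; split=> //; exact: (hat_rel_pinned hX hE ES Dx Ax SD SA hD hA).
Qed.

Lemma hyp_normal X (ent : (X -> X -> Prop) -> Prop) n :
  is_ballean ent -> ultradiscrete ent -> 0 < n -> normal (hyp_ent ent n).
Proof.
move=> hX hud n_gt0 P Q hPQ.
have hI := ultradiscrete_free_ultraideal hX hud; have [c] := ui_inhabited hI.
have [bP|bQ] := ui_prime hI (nontrivial_pts_meet_bounded hX hI hPQ); last first.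
  exact: (hyp_separate hX c n_gt0 (proj1 hud) hPQ bQ).
have [U [V [hU [hV hUV]]]] := hyp_separate hX c n_gt0 (proj1 hud) (asym_disjoint_sym hPQ) bP.
by exists V, U; do 2!split=> //; move=> Y [VY UY]; exact: (hUV Y (conj UY VY)).
Qed.

Theorem theorem1p10 (X : Type) (ent : (X -> X -> Prop) -> Prop)
  (hX : is_ballean ent) (hud : ultradiscrete ent) (n : nat) (hn : 2 <= n) :
  ~ normal (power_ent ent n) /\ normal (hyp_ent ent n).
Proof.
split; first exact: power_not_normal hX (ultradiscrete_free_ultraideal hX hud) hn.
by apply: hyp_normal; last exact: ltnW.
Qed.
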